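(* There is a constant $c_{12}>0$ depending only on $s$ and $p$ such that the following holds. Suppose $0<x<c_{12}$. Let $t_0$ be an arbitrary moment of time with $a_{\min,t_0}>0$, and let $T=Cn\ln\frac{1}{a_{\min,t_0}}$ for an arbitrarily fixed constant positive integer $C$. Then with probability $1-e^{-n^{\Omega(1)}}$, for all $t\in[t_0,t_0+T]$, $$\ln\frac{1}{\max\{\frac1n,a_{\min,t}\}}\le 100C\ln\frac{1}{a_{\min,t_0}}.$$
   Context: Population protocol model: $n$ agents; in each step a scheduler picks an ordered pair (initiator, receiver) of distinct agents uniformly at random; rules written $A:B\mapsto C$ mean an initiator in state $A$ turns a receiver in state $B$ into $C$ (initiator unchanged). Time is counted in steps. Protocol $P_o$ has a source state $X$ (never changed) and states $A_i^+,A_i^{++}$, $i\in\{1,2,3\}$, indices modulo 3, $A_i^?$ denoting either flavor. Rules for each $i$: (1) $A_i^?:A_i^?\mapsto A_i^{++}$; (2) $A_i^?:A_{i+1}^?\mapsto A_{i+1}^+$; (3) $A_i^+:A_{i-1}^?\mapsto A_i^+$ w.p. $p$, else $A_{i-1}^+$; (4) $A_i^{++}:A_{i-1}^?\mapsto A_i^+$ w.p. $2p$, else $A_{i-1}^+$; (5) $X:A_j^?\mapsto A_\ell^+$, $\ell$ uniform in $\{1,2,3\}$. Here $p>0$ is a sufficiently small constant depending on $s$. Notation: $x=\#X/n$ (constant over the execution), $a_i=(\#A_i^++\#A_i^{++})/n$, $s=a_1+a_2+a_3$, $a_{\min}=\min_i a_i$; subscript $t$ denotes the value at step $t$. *)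

From HB Require Import structures.
From mathcomp Require Import all_boot all_order all_algebra.
From mathcomp Require Import reals sequences exp.
Set Implicit Arguments. Unset Strict Implicit. Unset Printing Implicit Defensive.
Import Order.TTheory GRing.Theory Num.Theory.
Local Open Scope ring_scope.

(* SX = source state X;  SA i b = A_{i+1}^+ (b = false) or
   A_{i+1}^{++} (b = true), i : 'I_3 (indices 1,2,3 of the paper are 0,1,2 here,
   arithmetic mod 3);  SO = an agent not taking part in P_o (inert: it never
   changes and interactions involving it change nothing). *)
Inductive St := SX | SA of 'I_3 & bool | SO.

Definition St_enc (s : St) : option (option ('I_3 * bool)) :=
  match s with SX => None | SA i b => Some (Some (i, b)) | SO => Some None end.
Definition St_dec (o : option (option ('I_3 * bool))) : St :=
  match o with None => SX | Some (Some (i, b)) => SA i b | Some None => SO end.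
Lemma St_encK : cancel St_enc St_dec. Proof. by case. Qed.
HB.instance Definition _ := Finite.copy St (can_type St_encK).

Definition isucc (i j : 'I_3) : bool := (j : nat) == (i.+1 %% 3)%N.

Section Protocol.
Variable R : realType.
Variable p : R.

(* [out a b z] = probability that a receiver in state b, interacting with an
   initiator in state a, ends up in state z (rules (1)-(5); otherwise no change). *)
Definition out (a b z : St) : R :=
  match a, b with
  | SA i ai, SA j _ =>
      if j == i then (z == SA i true)%:R
      else if isucc i j then (z == SA j false)%:R
      else (* j = i-1 : rules (3),(4) *)
        let q := if ai then 2 * p else p in
        q * (z == SA i false)%:R + (1 - q) * (z == SA j false)%:R
  | SX, SA _ _ =>
      3^-1 * (if z is SA _ false then 1 else 0)
  | _, _ => (z == b)%:R
  end.

Variable n : nat.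
Definition config := {ffun 'I_n -> St}.

Definition upd (c : config) (v : 'I_n) (z : St) : config :=
  [ffun w => if w == v then z else c w].

Definition trans (c c' : config) : R :=
  \sum_(u : 'I_n) \sum_(v : 'I_n | u != v)
     (n%:R * (n%:R - 1))^-1 *
     \sum_(z : St) out (c u) (c v) z * (c' == upd c v z)%:R.

(* [stay G k c] = probability that the chain started in c at time 0 satisfies
   G at every time t = 0, 1, ..., k. *)
Fixpoint stay (G : pred config) (k : nat) (c : config) : R :=
  match k with
  | 0 => (G c)%:R
  | k'.+1 => (G c)%:R * \sum_(c' : config) trans c c' * stay G k' c'
  end.

Definition numX (c : config) : nat := #|[set u | c u == SX]|.
Definition numA (c : config) : nat :=
  #|[set u | if c u is SA _ _ then true else false]|.
Definition afrac (c : config) (i : 'I_3) : R :=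
  #|[set u | if c u is SA j _ then j == i else false]|%:R / n%:R.
Definition amin (c : config) : R :=
  Num.min (Num.min (afrac c 0) (afrac c 1)) (afrac c 2).

End Protocol.

Arguments afrac {R n}.
Arguments amin {R n}.

(* Write N_i for the number of agents of class i and rho = (2pn + #X) / (n(n-1)).
   An agent leaves its class only as a receiver, through rule (3), (4) or (5), so a
   step decreases N_i with probability at most rho N_i.  Hence, for 0 <= lam <= 1/2,
   E[exp(-lam N_i')] <= exp(-lam N_i) (1 + (e^lam - 1) rho N_i) <= exp(-lam (1 - 2 rho) N_i),
   and with lam_k = (1 - 2 rho)^k / 2 and tau = a_min(t0)^(100 C) the potential
   Phi_k = exp(tau n / 2) sum_i exp(-lam_k N_i) satisfies E[Phi_k(next)] <= Phi_(k+1).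
   As Phi_k >= 1 once some a_i < tau, the probability of leaving the good set within
   k steps is at most Phi_k(c0).  Since rho = O(1/n), lam_k >= a_min(t0)^(C/4) / 2 for
   k <= T, which makes Phi_k(c0) <= 3 exp(tau n / 2 - lam_k a_min(t0) n) <= exp(-n^(1/4)).
   If tau <= 1/n every configuration is good. *)

From HB Require Import structures.
From mathcomp Require Import all_boot all_order all_algebra.
From mathcomp Require Import reals sequences exp.
From mathcomp Require Import lra zify ring.
Import Order.TTheory GRing.Theory Num.Theory.
Local Open Scope ring_scope.

Set Implicit Arguments. Unset Strict Implicit.

Lemma ord3 (i : 'I_3) : [\/ i = 0, i = 1 | i = 2].
Proof.
case: i => [[|[|[|k]]] Hk]; [constructor 1 | constructor 2 | constructor 3 | by []].
all: exact: val_inj.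
Qed.

Definition isA (i : 'I_3) (z : St) : bool := if z is SA j _ then j == i else false.

Definition numAi n (c : config n) (i : 'I_3) : nat := #|[set u | isA i (c u)]|.

Lemma card_upd n (c : config n) v z (P : pred St) :
  (#|[set u | P (upd c v z u)]| + P (c v) = #|[set u | P (c u)]| + P z)%N.
Proof.
rewrite (cardsD1 v [set u | P (upd c v z u)]) (cardsD1 v [set u | P (c u)]).
rewrite !inE /upd ffunE eqxx.
have -> : [set u | P (upd c v z u)] :\ v = [set u | P (c u)] :\ v.
  by apply/setP => u; rewrite !inE /upd ffunE; case: eqP.
lia.
Qed.

Lemma sum_indicator_mul (R : pzSemiRingType) (T : finType) (e : T) (g : T -> R) :
  \sum_(x : T) (x == e)%:R * g x = g e.
Proof. by rewrite (bigD1 e) //= eqxx mul1r big1 ?addr0 // => x /negbTE ->; rewrite mul0r. Qed.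

Section Kernel.
Variables (R : realType) (p : R).

Lemma sum_two_point (q r : R) (A B : St) (h : St -> R) :
  \sum_z (q * (z == A)%:R + r * (z == B)%:R) * h z = q * h A + r * h B.
Proof.
under eq_bigr do rewrite mulrDl -!mulrA.
by rewrite big_split /= -!mulr_sumr !sum_indicator_mul.
Qed.

Lemma sum_SA_false : \sum_(z : St) ((if z is SA _ false then 1 else 0) : R) = 3.
Proof.
rewrite (bigD1 (SA 0 false)) // (bigD1 (SA 1 false)) // (bigD1 (SA 2 false)) //= big1.
  by rewrite addr0; lra.
by case=> // i [] //; case: (ord3 i) => ->.
Qed.

Lemma out_sum1 a b : \sum_z out p a b z = 1.
Proof.
have sum1 (e : St) : \sum_z ((z == e)%:R : R) = 1.
  by rewrite (bigD1 e) //= eqxx big1 ?addr0 // => z /negbTE ->.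
case: a => [|i ai|]; case: b => [|j bj|] /=; rewrite ?sum1 //;
  first by rewrite -mulr_sumr sum_SA_false mulVf // pnatr_eq0.
all: case: (j == i); rewrite ?sum1 //; case: (isucc i j); rewrite ?sum1 //.
all: by under eq_bigr do rewrite -[_ + _]mulr1; rewrite sum_two_point; ring.
Qed.

Lemma out_neq0_SX a b z : out p a b z != 0 -> (z == SX) = (b == SX).
Proof.
case: a => [|i ai|]; case: b => [|j bj|]; case: z => [|k bk|] //=; rewrite ?mulr0 ?eqxx //.
by case: ifP; rewrite ?eqxx //; case: ifP; rewrite ?addr0 ?eqxx.
Qed.

Lemma out_ge0 a b z : 0 <= p -> 2 * p <= 1 -> 0 <= out p a b z.
Proof.
move=> p_ge0 p_le.
case: a => [|i ai|]; case: b => [|j bj|] //=; rewrite ?ler0n //.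
  by case: z => [|? []|]; rewrite ?mulr1 ?mulr0 // invr_ge0 ler0n.
all: case: ifP => _; rewrite ?ler0n //; case: ifP => _; rewrite ?ler0n //.
all: apply: addr_ge0; apply: mulr_ge0; rewrite ?ler0n //.
all: by case: ai => /=; lra.
Qed.

Lemma out_leave_le i a b : 0 <= p -> 2 * p <= 1 -> isA i b ->
  \sum_z out p a b z * (~~ isA i z)%:R <= 2 * p + (a == SX)%:R.
Proof.
move=> p_ge0 p_le.
case: a => [|i' ai|].
- move=> _; apply: (@le_trans _ _ (\sum_z out p SX b z)); last by rewrite out_sum1 /=; lra.
  apply: ler_sum => z _; rewrite -[X in _ <= X]mulr1; apply: ler_wpM2l; first exact: out_ge0.
  by case: (~~ isA i z); rewrite ?ler0n ?ler1n.
- case: b => [|j bj|] //= /eqP <-.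
  have ind e k : \sum_z (z == e)%:R * (~~ isA k z)%:R = (~~ isA k e)%:R :> R.
    exact: sum_indicator_mul.
  have [->|neq] := eqVneq j i'; first by rewrite ind /= eqxx /=; lra.
  case: (isucc i' j); first by rewrite ind /= eqxx /=; lra.
  rewrite sum_two_point /= eqxx eq_sym (negbTE neq) /= mulr0 addr0 mulr1.
  by case: ai => /=; lra.
- case: b => [|j bj|] //= /eqP ->.
  by rewrite sum_indicator_mul /= eqxx /=; lra.
Qed.

End Kernel.

Section Chain.
Variables (R : realType) (p : R) (n : nat).
Implicit Types (c : config n) (G I : pred (config n)).

Lemma pairs_gt0 : (1 < n)%N -> 0 < n%:R * (n%:R - 1) :> R.
Proof. by move=> n_gt1; rewrite mulr_gt0 ?ltr0n ?subr_gt0 ?ltr1n //; lia. Qed.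

Lemma natr_card_set (P : pred 'I_n) : (#|[set u | P u]|%:R : R) = \sum_u (P u)%:R.
Proof. by rewrite -sum1dep_card big_mkcond natr_sum; apply: eq_bigr => u _; case: (P u). Qed.

Lemma sum_offdiag (x : R) :
  \sum_(u : 'I_n) \sum_(v : 'I_n | u != v) x = x * (n%:R * (n%:R - 1)).
Proof.
have row u : \sum_(v : 'I_n | u != v) x = x * (n%:R - 1).
  have := sumr_const 'I_n x; rewrite card_ord (bigD1 u) //= -mulr_natr.
  under eq_bigl do rewrite eq_sym.
  by move=> sum_all; apply: (@addrI _ x); rewrite sum_all; ring.
by under eq_bigr do rewrite row; rewrite sumr_const card_ord -mulr_natr; ring.
Qed.

Lemma sum_transE c (g : config n -> R) :
  \sum_c' trans p c c' * g c' =
  \sum_(u : 'I_n) \sum_(v : 'I_n | u != v) (n%:R * (n%:R - 1))^-1 *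
     \sum_(z : St) out p (c u) (c v) z * g (upd c v z).
Proof.
rewrite /trans; transitivity (\sum_c' \sum_(u : 'I_n) \sum_(v : 'I_n | u != v) \sum_(z : St)
   (n%:R * (n%:R - 1))^-1 * out p (c u) (c v) z * ((c' == upd c v z)%:R * g c')).
  apply: eq_bigr => c' _; rewrite mulr_suml; apply: eq_bigr => u _; rewrite mulr_suml.
  apply: eq_bigr => v _; rewrite -mulrA mulr_suml mulr_sumr; apply: eq_bigr => z _.
  by rewrite !mulrA.
rewrite exchange_big; apply: eq_bigr => u _; rewrite exchange_big; apply: eq_bigr => v _.
rewrite exchange_big mulr_sumr; apply: eq_bigr => z _.
by rewrite -mulr_sumr sum_indicator_mul mulrA.
Qed.

Lemma sum_trans1 c : (1 < n)%N -> \sum_c' trans p c c' = 1.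
Proof.
move=> n_gt1.
have := sum_transE c (fun=> 1); under eq_bigr do rewrite mulr1; move=> ->.
under eq_bigr do under eq_bigr do under eq_bigr do rewrite mulr1.
under eq_bigr do under eq_bigr do rewrite out_sum1 mulr1.
by rewrite sum_offdiag mulVf // gt_eqF // pairs_gt0.
Qed.

Lemma numX_upd c u v z : out p (c u) (c v) z != 0 -> numX (upd c v z) = numX c.
Proof.
move=> /out_neq0_SX same; have := card_upd c v z (fun z => z == SX).
by rewrite /numX /= same; lia.
Qed.

Lemma stay_eq1 G k c : (1 < n)%N -> (forall c, G c) -> stay p G k c = 1.
Proof.
move=> n_gt1 G_all; elim: k c => [|k IH] c /=; rewrite G_all //= mul1r.
by under eq_bigr do rewrite IH mulr1; rewrite sum_trans1.
Qed.

Lemma stay_ge_potential I G (f : nat -> config n -> R) k c :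
  0 <= p -> 2 * p <= 1 -> (1 < n)%N ->
  (forall c u v z, I c -> out p (c u) (c v) z != 0 -> I (upd c v z)) ->
  (forall k c, 0 <= f k c) ->
  (forall k c, I c -> ~~ G c -> 1 <= f k c) ->
  (forall k c, I c -> G c -> \sum_c' trans p c c' * f k c' <= f k.+1 c) ->
  I c -> 1 - f k c <= stay p G k c.
Proof.
move=> p_ge0 p_le n_gt1 I_step f_ge0 f_bad f_step.
elim: k c => [|k IH] c Ic /=.
  by case: (boolP (G c)) => Gc /=; [have := f_ge0 0%N c | have := f_bad 0%N c Ic Gc]; lra.
case: (boolP (G c)) => Gc /=; last by have := f_bad k.+1 c Ic Gc; rewrite mul0r; lra.
rewrite mul1r; apply: (@le_trans _ _ (\sum_c' trans p c c' * (1 - f k c'))).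
  under eq_bigr do rewrite mulrBr mulr1.
  by rewrite sumrB sum_trans1 //; have := f_step k c Ic Gc; lra.
rewrite !sum_transE; apply: ler_sum => u _; apply: ler_sum => v _.
apply: ler_wpM2l.
  by rewrite invr_ge0 ltW // pairs_gt0.
apply: ler_sum => z _.
have [->|out_neq0] := eqVneq (out p (c u) (c v) z) 0; first by rewrite !mul0r.
by apply: ler_wpM2l; [exact: out_ge0 | exact: IH (I_step _ _ _ _ Ic out_neq0)].
Qed.

End Chain.

Lemma expR_sub1_le (R : realType) (l : R) : 0 <= l -> l <= 1/2 -> expR l - 1 <= 2 * l.
Proof.
move=> l_ge0 l_le.
have expRN_ge := expR_ge1Dx (- l).
have expRNK : expR l * expR (- l) = 1 by rewrite -expRD subrr expR0.
have := expR_gt0 l; nra.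
Qed.

Section Potential.
Variables (R : realType) (p : R) (n : nat).
Implicit Types (c : config n) (lam : R).

Definition hit_rate (X : nat) : R := (2 * p * n%:R + X%:R) / (n%:R * (n%:R - 1)).

Definition pot lam c : R := \sum_(i < 3) expR (- lam * (numAi c i)%:R).

Lemma expR_numAi_upd lam c v z i : 0 <= lam ->
  expR (- lam * (numAi (upd c v z) i)%:R) <=
  expR (- lam * (numAi c i)%:R) * (1 + (expR lam - 1) * (isA i (c v) && ~~ isA i z)%:R).
Proof.
move=> lam_ge0; have := card_upd c v z (isA i); rewrite -!/(numAi _ i).
case: (isA i (c v)); case: (isA i z) => /= card_eq; rewrite ?mulr0 ?addr0 ?mulr1.
- by have -> : numAi (upd c v z) i = numAi c i by lia.
- have -> : numAi c i = (numAi (upd c v z) i).+1 by lia.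
  by rewrite addrC subrK -expRD -natr1 ler_expR; lra.
- have -> : numAi (upd c v z) i = (numAi c i).+1 by lia.
  by rewrite ler_expR -natr1; lra.
- by have -> : numAi (upd c v z) i = numAi c i by lia.
Qed.

Lemma sum_out_expR_numAi lam c u v i : 0 <= p -> 2 * p <= 1 -> 0 <= lam ->
  \sum_z out p (c u) (c v) z * expR (- lam * (numAi (upd c v z) i)%:R) <=
  expR (- lam * (numAi c i)%:R) *
    (1 + (expR lam - 1) * (isA i (c v))%:R * (2 * p + (c u == SX)%:R)).
Proof.
move=> p_ge0 p_le lam_ge0.
have k_ge0 : 0 <= expR lam - 1 by have := expR_ge1Dx lam; lra.
apply: le_trans (_ : _ <= \sum_z out p (c u) (c v) z * (expR (- lam * (numAi c i)%:R) *
   (1 + (expR lam - 1) * (isA i (c v) && ~~ isA i z)%:R))) _.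
  by apply: ler_sum => z _; rewrite ler_wpM2l ?out_ge0 ?expR_numAi_upd.
under eq_bigr do rewrite mulrCA.
rewrite -mulr_sumr ler_wpM2l ?expR_ge0 //.
under eq_bigr do rewrite mulrDr mulr1 mulrCA.
rewrite big_split /= out_sum1 -mulr_sumr lerD2l -mulrA ler_wpM2l //.
case leave: (isA i (c v)) => /=; last by rewrite mul0r big1 // => z _; rewrite mulr0.
by rewrite mul1r; exact: out_leave_le.
Qed.

Lemma sum_trans_expR_numAi lam c i : 0 <= p -> 2 * p <= 1 -> 0 <= lam -> (1 < n)%N ->
  \sum_c' trans p c c' * expR (- lam * (numAi c' i)%:R) <=
  expR (- lam * (numAi c i)%:R) * (1 + (expR lam - 1) * (numAi c i)%:R * hit_rate (numX c)).
Proof.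
move=> p_ge0 p_le lam_ge0 n_gt1.
have pairs_neq0 : n%:R * (n%:R - 1) != 0 :> R by rewrite gt_eqF ?pairs_gt0.
have w_ge0 : 0 <= (n%:R * (n%:R - 1))^-1 :> R by rewrite invr_ge0 ltW ?pairs_gt0.
have k_ge0 : 0 <= expR lam - 1 by have := expR_ge1Dx lam; lra.
rewrite sum_transE.
set w := _^-1; set g := expR _; set k := expR lam - 1.
pose a (v : 'I_n) : R := (isA i (c v))%:R; pose b (u : 'I_n) : R := 2 * p + (c u == SX)%:R.
apply: le_trans (_ : _ <= \sum_u \sum_(v | u != v) w * (g * (1 + k * a v * b u))) _.
  by do 2 (apply: ler_sum => ? _); rewrite ler_wpM2l ?sum_out_expR_numAi.
have -> : \sum_u \sum_(v | u != v) w * (g * (1 + k * a v * b u))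
    = w * g * (n%:R * (n%:R - 1)) + w * g * k * \sum_u \sum_(v | u != v) a v * b u.
  rewrite -sum_offdiag !mulr_sumr -big_split; apply: eq_bigr => u _.
  by rewrite !mulr_sumr -big_split; apply: eq_bigr => v _ /=; ring.
have ab_le : \sum_u \sum_(v | u != v) a v * b u <= (\sum_v a v) * (\sum_u b u).
  rewrite big_distrlr exchange_big /=; apply: ler_sum => u _.
  rewrite big_mkcond /=; apply: ler_sum => v _.
  have ab_ge0 : 0 <= a v * b u by rewrite mulr_ge0 ?ler0n ?addr_ge0 ?mulr_ge0 ?ler0n //; lra.
  by case: ifP.
have sum_a : \sum_v a v = (numAi c i)%:R by rewrite /numAi natr_card_set.
have sum_b : \sum_u b u = 2 * p * n%:R + (numX c)%:R.
  by rewrite big_split /= sumr_const card_ord /numX natr_card_set mulr_natr.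
rewrite mulrAC mulVf // mul1r [X in _ <= X]mulrDr mulr1 lerD2l.
apply: le_trans (ler_wpM2l _ ab_le) _; first by rewrite !mulr_ge0 ?expR_ge0.
by rewrite sum_a sum_b /hit_rate /w; lra.
Qed.

Lemma hit_rate_ge0 X : 0 <= p -> (1 < n)%N -> 0 <= hit_rate X.
Proof.
move=> p_ge0 n_gt1; apply: divr_ge0; last exact/ltW/pairs_gt0.
by rewrite addr_ge0 ?mulr_ge0 ?ler0n.
Qed.

Lemma pot_step lam c : 0 <= p -> 2 * p <= 1 -> (1 < n)%N -> 0 <= lam -> lam <= 1/2 ->
  \sum_c' trans p c c' * pot lam c' <= pot (lam * (1 - 2 * hit_rate (numX c))) c.
Proof.
move=> p_ge0 p_le n_gt1 lam_ge0 lam_le.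
rewrite /pot; under eq_bigr do rewrite mulr_sumr; rewrite exchange_big /=.
apply: ler_sum => i _; apply: le_trans (sum_trans_expR_numAi _ _ p_ge0 p_le lam_ge0 n_gt1) _.
have rho_ge0 := hit_rate_ge0 (numX c) p_ge0 n_gt1.
have N_ge0 : 0 <= (numAi c i)%:R :> R by rewrite ler0n.
have k_le := expR_sub1_le lam_ge0 lam_le.
have k_ge0 : 0 <= expR lam - 1 by have := expR_ge1Dx lam; lra.
apply: le_trans (_ : _ <= expR (- lam * (numAi c i)%:R) *
    expR (2 * lam * (numAi c i)%:R * hit_rate (numX c))) _.
  rewrite ler_wpM2l ?expR_ge0 //; apply: le_trans (expR_ge1Dx _).
  by rewrite lerD2l !ler_wpM2r.
by rewrite -expRD ler_expR; lra.
Qed.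

End Potential.

Section Fractions.
Variables (R : realType) (n : nat).
Implicit Types (c : config n).

Lemma amin_le_afrac c i : amin c <= afrac c i :> R.
Proof. by rewrite /amin !ge_min; case: (ord3 i) => ->; rewrite lexx ?orbT. Qed.

Lemma amin_mul_le_numAi c i : (0 < n)%N -> amin c * n%:R <= (numAi c i)%:R :> R.
Proof. by move=> n_gt0; rewrite -ler_pdivlMr ?ltr0n //; exact: amin_le_afrac. Qed.

Lemma numAi_sum_le c : (\sum_(i < 3) numAi c i <= n)%N.
Proof.
under eq_bigr do rewrite /numAi -sum1dep_card big_mkcond.
rewrite exchange_big -[X in (_ <= X)%N]card_ord -sum1_card; apply: leq_sum => u _.
by rewrite !big_ord_recr big_ord0 /=; case: (c u) => [|j b|] //=; case: (ord3 j) => ->.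
Qed.

Lemma amin_le_third c : (0 < n)%N -> amin c <= 1/3 :> R.
Proof.
move=> n_gt0; have n_pos : 0 < n%:R :> R by rewrite ltr0n.
have sum_le : (numAi c 0)%:R + (numAi c 1)%:R + (numAi c 2)%:R <= n%:R :> R.
  by rewrite -!natrD ler_nat; have := numAi_sum_le c; rewrite !big_ord_recr big_ord0.
have := amin_mul_le_numAi c 0 n_gt0; have := amin_mul_le_numAi c 1 n_gt0.
have := amin_mul_le_numAi c 2 n_gt0; nra.
Qed.

Lemma numAi_lt_of_amin_lt c (tau : R) : (0 < n)%N -> amin c < tau ->
  exists i, (numAi c i)%:R < tau * n%:R.
Proof.
move=> n_gt0; rewrite /amin !gt_min => /orP[/orP[]|] lt_tau; [exists 0 | exists 1 | exists 2].
all: by rewrite -ltr_pdivrMr ?ltr0n.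
Qed.

Lemma pot_le_amin (lam : R) c : (0 < n)%N -> 0 <= lam ->
  pot lam c <= 3 * expR (- lam * (amin c * n%:R)).
Proof.
move=> n_gt0 lam_ge0.
have each i : expR (- lam * (numAi c i)%:R) <= expR (- lam * (amin c * n%:R)).
  by rewrite ler_expR !mulNr lerN2 ler_wpM2l // amin_mul_le_numAi.
apply: le_trans (ler_sum _ (fun i _ => each i)) _.
by rewrite sumr_const card_ord mulr_natl.
Qed.

Lemma expR_mul_pot_ge1 (lam mu m : R) c i : 0 <= lam -> lam <= mu ->
  (numAi c i)%:R <= m -> 1 <= expR (mu * m) * pot lam c.
Proof.
move=> lam_ge0 lam_le N_le; rewrite /pot (bigD1 i) //= mulrDr -expRD.
have N_ge0 : 0 <= (numAi c i)%:R :> R by rewrite ler0n.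
have exp_ge1 : 1 <= expR (mu * m + - lam * (numAi c i)%:R).
  by rewrite -[X in X <= _]expR0 ler_expR; nra.
apply: le_trans exp_ge1 _; rewrite lerDl mulr_ge0 ?expR_ge0 //.
by rewrite sumr_ge0 // => j _; rewrite expR_ge0.
Qed.

End Fractions.

Section Estimates.
Variable R : realType.

Lemma expR_le_1B (y : R) : 0 <= y -> y <= 1/2 -> expR (- (2 * y)) <= 1 - y.
Proof.
move=> y_ge0 y_le.
have exp_ge := expR_ge1Dx (2 * y).
have expK : expR (2 * y) * expR (- (2 * y)) = 1 by rewrite -expRD subrr expR0.
have := expR_gt0 (- (2 * y)); nra.
Qed.

Lemma expR_le_1B_pow (y : R) k : 0 <= y -> y <= 1/2 -> expR (- (2 * y * k%:R)) <= (1 - y) ^+ k.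
Proof.
move=> y_ge0 y_le; rewrite -mulNr expRM_natr lerXn2r ?nnegrE ?expR_ge0 ?expR_le_1B //.
lra.
Qed.

Lemma powR_quarterK (N : R) : 0 <= N -> (N `^ (1/4)) ^+ 4 = N.
Proof. by move=> N_ge0; rewrite -powR_mulrn ?powR_ge0 // -powRrM (_ : 1 / 4 * 4 = 1) ?powRr1 //; lra. Qed.

Lemma three_expR_le (E M : R) : 6 <= E -> E ^+ 2 <= M -> 3 * expR (- (M / 3)) <= expR (- E).
Proof.
move=> E_ge E2_le.
have ln3_lt : ln (3 : R) < 3 by apply: ln_sublinear; lra.
rewrite -[X in X * _]lnK ?posrE // -expRD ler_expR.
by rewrite expr2 in E2_le; nra.
Qed.

Lemma start_estimate (N Q tau q a : R) :
  1296 <= N -> 0 <= Q -> Q <= 1/3 -> 0 <= tau -> tau <= Q ^+ 2 -> 1 < tau * N -> Q <= q * a ->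
  expR (1/2 * (tau * N)) * (3 * expR (- (1/2 * q) * (a * N))) <= expR (- N `^ (1/4)).
Proof.
move=> N_ge Q_ge0 Q_le tau_ge0 tau_le tauN_gt Q_le_qa.
set E := N `^ (1/4).
have E4 : E ^+ 4 = N by apply: powR_quarterK; lra.
have E_ge0 : 0 <= E := powR_ge0 _ _.
have E_ge6 : 6 <= E.
  rewrite leNgt; apply/negP => E_lt.
  by have := ltrXn2r 4 E_ge0 E_lt; rewrite E4 /= => N_lt; lra.
have E2_le : E ^+ 2 <= Q * N.
  have QN_ge0 : 0 <= Q * N by apply: mulr_ge0; lra.
  rewrite -(ler_pXn2r (_ : 0 < 2)%N) ?nnegrE ?exprn_ge0 // -exprM E4.
  have : 1 <= Q ^+ 2 * N by apply: le_trans (ltW tauN_gt) _; apply: ler_wpM2r; lra.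
  by rewrite expr2 expr2; nra.
apply: le_trans (three_expR_le E_ge6 E2_le).
rewrite mulrCA -expRD ler_wpM2l // ler_expR.
rewrite expr2 in tau_le; nra.
Qed.

Lemma ln_inv_le (y B : R) : 0 < y -> (ln (1 / y) <= B) = (expR (- B) <= y).
Proof.
move=> y_gt0; rewrite div1r lnV ?posrE // -[in RHS](lnK (_ : y \in Num.pos)) ?posrE //.
by rewrite ler_expR lerNl.
Qed.

End Estimates.

Lemma hit_rate_small (R : realType) (p x : R) n X :
  0 <= p <= 1/100 -> 0 <= x <= 1/100 -> X%:R = x * n%:R -> (1 < n)%N ->
  16 * hit_rate p n X * n%:R <= 1.
Proof.
move=> /andP[p_ge0 p_le] /andP[x_ge0 x_le] X_eq n_gt1.
have n_ge2 : 2 <= n%:R :> R by rewrite (ler_nat _ 2).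
rewrite /hit_rate X_eq mulrA mulrAC ler_pdivrMr ?pairs_gt0 // mul1r.
have : 16 * (2 * p + x) <= 12/25 by lra.
nra.
Qed.

Section Argument.
Variables (R : realType) (p : R) (n : nat).

Lemma pot_ge0 (lam : R) (c : config n) : 0 <= pot lam c.
Proof. by rewrite sumr_ge0 // => i _; rewrite expR_ge0. Qed.

Lemma stay_ge_start_potential (G : pred (config n)) (tau : R) k c0 :
  0 <= p -> 2 * p <= 1 -> (1 < n)%N -> 2 * hit_rate p n (numX c0) <= 1 ->
  (forall c, ~~ G c -> amin c < tau) ->
  1 - expR (1/2 * (tau * n%:R)) * pot (1/2 * (1 - 2 * hit_rate p n (numX c0)) ^+ k) c0
    <= stay p G k c0.
Proof.
move=> p_ge0 p_le n_gt1 rho_le G_bad.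
have rho_ge0 := hit_rate_ge0 (numX c0) p_ge0 n_gt1.
set r := 1 - 2 * hit_rate p n (numX c0).
have r_ge0 : 0 <= r by rewrite /r; lra.
have r_le1 : r <= 1 by rewrite /r; lra.
have lam_ge0 k' : 0 <= 1/2 * r ^+ k' by rewrite mulr_ge0 ?exprn_ge0 //; lra.
have lam_le k' : 1/2 * r ^+ k' <= 1/2 by rewrite ler_piMr ?exprn_ile1 //; lra.
apply: (stay_ge_potential (I := fun c => numX c == numX c0)
  (f := fun k c => expR (1/2 * (tau * n%:R)) * pot (1/2 * r ^+ k) c)) => //.
- by move=> c u v z /eqP <- out_neq0; rewrite (numX_upd out_neq0).
- by move=> k' c; rewrite mulr_ge0 ?expR_ge0 ?pot_ge0.
- move=> k' c _ /G_bad /numAi_lt_of_amin_lt [|i /ltW N_le]; first lia.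
  exact: expR_mul_pot_ge1 N_le.
- move=> k' c /eqP X_eq _.
  under eq_bigr do rewrite mulrCA; rewrite -mulr_sumr ler_wpM2l ?expR_ge0 //.
  by have := pot_step c p_ge0 p_le n_gt1 (lam_ge0 k') (lam_le k'); rewrite X_eq -/r exprSr mulrA.
Qed.

End Argument.

Lemma pot_start_le (R : realType) n (c0 : config n) (C k : nat) (rho : R) :
  (1296 <= n)%N -> 0 < amin (R:=R) c0 -> (0 < C)%N -> 0 <= rho -> 16 * rho * n%:R <= 1 ->
  let L := ln (1 / amin (R:=R) c0) in let tau := expR (- (100 * C%:R * L)) in
  k%:R <= C%:R * n%:R * L -> 1 < tau * n%:R ->
  expR (1/2 * (tau * n%:R)) * pot (1/2 * (1 - 2 * rho) ^+ k) c0 <= expR (- n%:R `^ (1/4)).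
Proof.
move=> n_ge a0_gt0 C_gt0 rho_ge0 rho_le L tau k_le tau_gt.
have n_ge' : 1296 <= n%:R :> R by rewrite (ler_nat _ 1296).
have a0_le : amin c0 <= 1/3 :> R by apply: amin_le_third; lia.
have a0E : expR (- L) = amin c0 by rewrite /L div1r lnV ?posrE // opprK lnK ?posrE.
have L_ge0 : 0 <= L by rewrite /L div1r lnV ?posrE // oppr_ge0 ln_le0 //; lra.
have C_ge1 : 1 <= C%:R :> R by rewrite ler1n.
have CL_ge0 : 0 <= C%:R * L by rewrite mulr_ge0 //; lra.
have rho_small : 2 * rho <= 1/2 by nra.
have rk_ge : expR (- (C%:R * L / 4)) <= (1 - 2 * rho) ^+ k.
  apply: le_trans (expR_le_1B_pow k _ rho_small); [rewrite ler_expR | lra].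
  have := ler_wpM2l rho_ge0 k_le; have := ler_wpM2r CL_ge0 rho_le; nra.
apply: le_trans (ler_wpM2l (expR_ge0 _) (pot_le_amin _ _ _)) _;
  [exact: leq_trans n_ge | rewrite mulr_ge0 ?exprn_ge0 //; lra |].
apply: (start_estimate (Q := expR (- (2 * C%:R * L)))) => //; rewrite ?expR_ge0 //.
- by apply: le_trans a0_le; rewrite -a0E ler_expR; nra.
- by rewrite -expRM_natr ler_expR; nra.
- rewrite -a0E; apply: le_trans (ler_wpM2r (expR_ge0 _) rk_ge).
  by rewrite -expRD ler_expR; nra.
Qed.

Theorem lemma18 (R : realType) :
  forall s : R, 0 < s <= 1 ->
  exists p0 : R, 0 < p0 /\
  forall p : R, 0 < p <= p0 ->
  exists c12 : R, 0 < c12 /\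
  forall x : R, 0 < x < c12 ->
  forall C : nat, (0 < C)%N ->
  exists delta : R, 0 < delta /\
  exists n0 : nat,
  forall (n : nat) (c0 : config n), (n0 <= n)%N ->
    (numX c0)%:R = x * n%:R ->
    (numA c0)%:R = s * n%:R ->
    0 < amin (R:=R) c0 ->
    let T := C%:R * n%:R * ln (1 / amin (R:=R) c0) in
    let good := fun c : config n =>
      ln (1 / Num.max (1 / n%:R) (amin (R:=R) c)) <= 100 * C%:R * ln (1 / amin (R:=R) c0) in
    forall k : nat, k%:R <= T ->
      1 - expR (- powR n%:R delta) <= stay p good k c0.
Proof.
move=> s _; exists (1/100); split=> [|p /andP[p_gt0 p_le]]; first lra.
exists (1/100); split=> [|x /andP[x_gt0 x_lt] C C_gt0]; first lra.
exists (1/4); split; first lra.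
exists 1296%N => n c0 n_ge X_eq _ a0_gt0 T good k k_le.
have n_gt1 : (1 < n)%N by apply: leq_trans n_ge.
have p_le' : 2 * p <= 1 by lra.
have rho_le : 16 * hit_rate p n (numX c0) * n%:R <= 1.
  by apply: (hit_rate_small _ _ X_eq n_gt1); apply/andP; split; lra.
have rho_ge0 := hit_rate_ge0 (numX c0) (ltW p_gt0) n_gt1.
set tau := expR (- (100 * C%:R * ln (1 / amin (R:=R) c0))).
have goodE c : good c = (tau <= 1 / n%:R) || (tau <= amin c).
  by rewrite /good ln_inv_le -?le_max // lt_max divr_gt0 ?ltr0n //; lia.
have [tau_le | tau_gt] := leP tau (1 / n%:R).
  rewrite stay_eq1 // => [|c]; last by rewrite goodE tau_le.
  by rewrite lerBlDr lerDl expR_ge0.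
apply: le_trans _ (stay_ge_start_potential k (ltW p_gt0) p_le' n_gt1 _ _).
- rewrite lerD2l lerN2; apply: (pot_start_le (C := C)) => //.
  by rewrite -ltr_pdivrMr ?ltr0n //; apply: leq_trans n_ge.
- have n_ge1 : 1 <= n%:R :> R by rewrite ler1n; lia.
  nra.
- by move=> c; rewrite goodE (lt_geF tau_gt) /= -ltNge.
Qed.
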